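(* Let $V$ be a finite vocabulary. Each word $x\in V$ has a synonym set $S_x\subseteq V$ with $x\in S_x$, and the synonym relation is symmetric ($x'\in S_x$ iff $x\in S_{x'}$). Each word $x\in V$ has a nonempty perturbation set $P_x\subseteq V$. Fix integers $L\ge 1$ and $0\le R\le L$, a finite label set $\mathcal{Y}$, and a classifier $f: V^L\to\mathcal{Y}$. For a sentence $X=x_1,\ldots,x_L\in V^L$ let $$S_X=\Big\{X'=x'_1,\ldots,x'_L\in V^L:\ \textstyle\sum_{i=1}^L \mathbb{I}\{x'_i\neq x_i\}\le R,\ x'_i\in S_{x_i}\ \forall i\Big\},$$ let $\Pi_X$ be the probability distribution on $V^L$ given by $\Pi_X(Z)=\prod_{i=1}^L \mathbb{I}\{z_i\in P_{x_i}\}/|P_{x_i}|$ for $Z=z_1,\ldots,z_L$, and let $g^{\mathrm{RS}}(X,c)=\mathbb{P}_{Z\sim\Pi_X}(f(Z)=c)$ for $c\in\mathcal{Y}$. Assume $|P_x|=|P_{x'}|$ for every word $x$ and every synonym $x'\in S_x$. Define, for each word $x$, $q_x=\min_{x'\in S_x}|P_x\cap P_{x'}|/|P_x|$. For a given sentence $X=x_1,\ldots,x_L$, order its positions as $i_1,\ldots,i_L$ so that $q_{x_{i_1}}\le q_{x_{i_2}}\le\cdots\le q_{x_{i_L}}$, and set $q_X:=1-\prod_{j=1}^R q_{x_{i_j}}$. Then for every label $c\in\mathcal{Y}$, $$\min_{X'\in S_X} g^{\mathrm{RS}}(X',c)\ge \max\big(g^{\mathrm{RS}}(X,c)-q_X,\,0\big),\qquad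 \max_{X'\in S_X} g^{\mathrm{RS}}(X',c)\le \min\big(g^{\mathrm{RS}}(X,c)+q_X,\,1\big).$$ Equivalently, $|g^{\mathrm{RS}}(X',c)-g^{\mathrm{RS}}(X,c)|\le q_X$ for all $X'\in S_X$ and all $c\in\mathcal{Y}$.
   Context: $g^{\mathrm{RS}}(X,c)$ is the ''soft score'' of label $c$ of the smoothed classifier $f^{\mathrm{RS}}(X)=\arg\max_{c\in\mathcal{Y}} g^{\mathrm{RS}}(X,c)$. $S_X$ is the set of adversarial sentences obtained by replacing at most $R$ words of $X$ by synonyms. *)

From HB Require Import structures.
From mathcomp Require Import all_boot all_order all_algebra.
Set Implicit Arguments. Unset Strict Implicit. Unset Printing Implicit Defensive.
Import Order.TTheory GRing.Theory Num.Theory.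
Local Open Scope ring_scope.

Definition sentence (V : finType) (L : nat) := {ffun 'I_L -> V}.

Definition adv_set (V : finType) (L R : nat) (S : V -> {set V})
  (X : sentence V L) : {set sentence V L} :=
  [set X' : sentence V L |
     (#|[set i : 'I_L | X' i != X i]| <= R)%N && [forall i, X' i \in S (X i)]].

Definition Pi (F : realFieldType) (V : finType) (L : nat) (P : V -> {set V})
  (X Z : sentence V L) : F :=
  \prod_(i < L) ((Z i \in P (X i))%:R / #|P (X i)|%:R).

Definition gRS (F : realFieldType) (V Y : finType) (L : nat) (P : V -> {set V})
  (f : sentence V L -> Y) (X : sentence V L) (c : Y) : F :=
  \sum_(Z : sentence V L | f Z == c) Pi F P X Z.

(* q_x = min_{x' in S_x} |P_x cap P_x'| / |P_x|  (S_x is nonempty since x in S_x;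
   the default 1 of the iterated min is attained at x' = x). *)
Definition qword (F : realFieldType) (V : finType) (S P : V -> {set V}) (x : V) : F :=
  \big[Num.min/1]_(x' in S x) (#|P x :&: P x'|%:R / #|P x|%:R).

Definition qsent (F : realFieldType) (V : finType) (L R : nat) (S P : V -> {set V})
  (X : sentence V L) : F :=
  1 - \prod_(q <- take R (sort <=%R [seq qword F S P (X i) | i <- enum 'I_L])) q.

From HB Require Import structures.
From mathcomp Require Import all_boot all_order all_algebra.
From mathcomp Require Import lra.
Set Implicit Arguments. Unset Strict Implicit. Unset Printing Implicit Defensive.
Import Order.TTheory GRing.Theory Num.Theory.
Local Open Scope ring_scope.

(* Couple Pi_X and Pi_X' through the measure
     M(Z) = prod_i 1{z_i in P_{x_i} cap P_{x'_i}} / |P_{x_i}|,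
   which lies below both of them because |P_{x_i}| = |P_{x'_i}|.  Two probability
   distributions dominating a common measure of mass m give every event
   probabilities at most 1 - m apart, and here
     m = prod_i |P_{x_i} cap P_{x'_i}| / |P_{x_i}|.
   The factors with x'_i = x_i equal 1 and the at most R others are at least
   q_{x_i}, so m is at least the product of the R smallest q_{x_i}. *)

Lemma perm_cons_cat_swap (T : eqType) (m y : T) (t u : seq T) : m \in u ->
  perm_eq (y :: t ++ u) (m :: t ++ y :: rem m u).
Proof.
move=> mu; apply: perm_trans (_ : perm_eq _ (y :: t ++ m :: rem m u)) _.
  by rewrite perm_cons perm_cat2l perm_to_rem.
rewrite -[y :: _]cat1s (perm_catCA [:: y] t) perm_sym.
rewrite -[m :: _]cat1s (perm_catCA [:: m] t) perm_cat2l.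
by rewrite (perm_catCA [:: m] [:: y]).
Qed.

Section SortedProducts.
Variable F : realFieldType.

(* [perm_eq w (t ++ u)] says that [t] is a sub-multiset of [w]. *)
Lemma prod_take_sorted_le (w : seq F) n t u :
  sorted <=%R w -> all (fun x => 0 <= x <= 1) w ->
  perm_eq w (t ++ u) -> (size t <= n)%N ->
  \prod_(x <- take n w) x <= \prod_(x <- t) x.
Proof.
elim: w n t u => [|m r IH] n t u w_sorted w01 wtu size_t.
  by case: t wtu {size_t} => [|? ?]; rewrite ?big_nil // => /perm_size.
case: n size_t => [|n] size_t.
  by case: t size_t {wtu} => // _; rewrite big_nil.
have r_sorted : sorted <=%R r := path_sorted w_sorted.
have m_min : all (>= m) r := order_path_min le_trans w_sorted.
case/andP: w01 => /andP[m0 m1] r01.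
have /andP[take_r_ge0 take_r_le1] : 0 <= \prod_(x <- take n r) x <= 1.
  rewrite big_seq prodr_ge0 ?prodr_ile1 // => x /mem_take /(allP r01) //.
  by case/andP.
rewrite /= big_cons.
have [mt | mNt] := boolP (m \in t).
  rewrite (perm_big _ (perm_to_rem mt)) big_cons ler_wpM2l //.
  apply: (IH n (rem m t) u) => //.
    rewrite -(perm_cons m); apply: perm_trans wtu _.
    by rewrite -cat_cons perm_cat2r perm_to_rem.
  by rewrite size_rem //; case: (size t) size_t.
(* The minimum [m] of [w] is not in [t]: trade the head [y] of [t] for [m]. *)
case: t wtu size_t mNt => [|y t'] wtu size_t mNt.
  by rewrite big_nil mulr_ile1.
have mu : m \in u.
  by have := perm_mem wtu m; rewrite mem_head mem_cat (negbTE mNt).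
have my : m <= y.
  have : y \in m :: r by rewrite (perm_mem wtu) mem_head.
  by rewrite in_cons => /orP[/eqP-> //|/(allP m_min)].
rewrite big_cons ler_pM //; apply: (IH n t' (y :: rem m u)) => //.
by rewrite -(perm_cons m); apply: perm_trans wtu (perm_cons_cat_swap _ _ mu).
Qed.

Lemma prod_take_sort_le (I : finType) (q : I -> F) (D : {set I}) n :
  (forall i, 0 <= q i <= 1) -> (#|D| <= n)%N ->
  \prod_(x <- take n (sort <=%R [seq q i | i <- enum I])) x <= \prod_(i in D) q i.
Proof.
move=> q01 card_D; rewrite -big_enum -(big_map q predT id).
apply: prod_take_sorted_le (map q (enum (~: D))) _ _ _ _.
- by apply: sort_sorted => x y; exact: le_total.
- by apply/allP => x; rewrite mem_sort => /mapP[i _ ->].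
- rewrite perm_sort -map_cat perm_map // uniq_perm ?enum_uniq //.
    by rewrite cat_uniq !enum_uniq andbT; apply/hasPn => i; rewrite !mem_enum inE.
  by move=> i; rewrite mem_cat !mem_enum in_setC orbN.
- by rewrite size_map -cardE.
Qed.

End SortedProducts.

Lemma sum_cond_sub_le_overlap (F : realFieldType) (T : finType)
    (p1 p2 m : T -> F) (Q : pred T) :
  (forall z, m z <= p1 z) -> (forall z, m z <= p2 z) -> \sum_z p1 z = 1 ->
  \sum_(z | Q z) p1 z - \sum_(z | Q z) p2 z <= 1 - \sum_z m z.
Proof.
move=> m_le_p1 m_le_p2 sum_p1.
apply: le_trans (_ : \sum_(z | Q z) (p1 z - m z) <= _).
  by rewrite sumrB lerB // ler_sum.
rewrite -sum_p1 -sumrB [leRHS](bigID Q) /= lerDl.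
by apply: sumr_ge0 => z _; rewrite subr_ge0.
Qed.

Lemma dist_sum_cond_le_overlap (F : realFieldType) (T : finType)
    (p1 p2 m : T -> F) (Q : pred T) :
  (forall z, m z <= p1 z) -> (forall z, m z <= p2 z) ->
  \sum_z p1 z = 1 -> \sum_z p2 z = 1 ->
  `|\sum_(z | Q z) p1 z - \sum_(z | Q z) p2 z| <= 1 - \sum_z m z.
Proof.
move=> m_le_p1 m_le_p2 sum_p1 sum_p2.
rewrite ler_norml (sum_cond_sub_le_overlap _ m_le_p1) // andbT.
by rewrite lerNl opprB (sum_cond_sub_le_overlap _ m_le_p2).
Qed.

Section Smoothing.
Variables (F : realFieldType) (V : finType) (L : nat) (P : V -> {set V}).
Hypothesis P_neq0 : forall x, P x != set0.

Lemma sum_natr_mem (A : {set V}) : \sum_j ((j \in A)%:R : F) = #|A|%:R.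
Proof.
by rewrite -sumr_const [RHS]big_mkcond; apply: eq_bigr => j _; case: (j \in A).
Qed.

Lemma sum_sentence_prod (G : 'I_L -> V -> F) :
  \sum_(Z : sentence V L) \prod_i G i (Z i) = \prod_i \sum_j G i j.
Proof. by rewrite bigA_distr_bigA. Qed.

Lemma Pi_ge0 (X Z : sentence V L) : 0 <= Pi F P X Z.
Proof. by apply: prodr_ge0 => i _; rewrite divr_ge0 ?ler0n. Qed.

Lemma sum_Pi (X : sentence V L) : \sum_Z Pi F P X Z = 1.
Proof.
rewrite (sum_sentence_prod (fun i j => (j \in P (X i))%:R / #|P (X i)|%:R)).
apply: big1 => i _.
by rewrite -mulr_suml sum_natr_mem divff // pnatr_eq0 -lt0n card_gt0.
Qed.

Lemma gRS_ge0 (Y : finType) (f : sentence V L -> Y) (X : sentence V L) (c : Y) :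
  0 <= gRS F P f X c.
Proof. by apply: sumr_ge0 => Z _; apply: Pi_ge0. Qed.

Lemma gRS_le1 (Y : finType) (f : sentence V L -> Y) (X : sentence V L) (c : Y) :
  gRS F P f X c <= 1.
Proof.
rewrite -(sum_Pi X) [leRHS](bigID (fun Z => f Z == c)) /= lerDl.
by apply: sumr_ge0 => Z _; apply: Pi_ge0.
Qed.

Definition overlap_ratio (x x' : V) : F := #|P x :&: P x'|%:R / #|P x|%:R.

Definition Pi_overlap (X X' Z : sentence V L) : F :=
  \prod_(i < L) ((Z i \in P (X i) :&: P (X' i))%:R / #|P (X i)|%:R).

Lemma natr_mem_setIl (A B : {set V}) z : ((z \in A :&: B)%:R : F) <= (z \in A)%:R.
Proof. by rewrite in_setI; case: (z \in A); case: (z \in B); rewrite ?ler01. Qed.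

Lemma Pi_overlap_le_Pi (X X' Z : sentence V L) : Pi_overlap X X' Z <= Pi F P X Z.
Proof.
apply: ler_prod => i _; rewrite divr_ge0 ?ler0n //=.
by rewrite ler_wpM2r ?invr_ge0 ?ler0n ?natr_mem_setIl.
Qed.

Lemma Pi_overlap_le_Pi_r (X X' Z : sentence V L) :
  (forall i, #|P (X' i)| = #|P (X i)|) ->
  Pi_overlap X X' Z <= Pi F P X' Z.
Proof.
move=> card_X'; apply: ler_prod => i _; rewrite divr_ge0 ?ler0n //= card_X'.
by rewrite setIC ler_wpM2r ?invr_ge0 ?ler0n ?natr_mem_setIl.
Qed.

Lemma sum_Pi_overlap (X X' : sentence V L) :
  \sum_Z Pi_overlap X X' Z = \prod_i overlap_ratio (X i) (X' i).
Proof.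
rewrite (sum_sentence_prod
  (fun i j => (j \in P (X i) :&: P (X' i))%:R / #|P (X i)|%:R)).
apply: eq_bigr => i _.
by rewrite -mulr_suml sum_natr_mem.
Qed.

Lemma dist_gRS_le (Y : finType) (f : sentence V L -> Y) (X X' : sentence V L)
    (c : Y) :
  (forall i, #|P (X' i)| = #|P (X i)|) ->
  `|gRS F P f X' c - gRS F P f X c| <= 1 - \prod_i overlap_ratio (X i) (X' i).
Proof.
move=> card_X'; rewrite -sum_Pi_overlap.
apply: dist_sum_cond_le_overlap; rewrite ?sum_Pi // => Z.
  exact: Pi_overlap_le_Pi_r.
exact: Pi_overlap_le_Pi.
Qed.

Lemma overlap_ratio_id x : overlap_ratio x x = 1.
Proof. by rewrite /overlap_ratio setIid divff // pnatr_eq0 -lt0n card_gt0. Qed.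

End Smoothing.

Section WordBounds.
Variables (F : realFieldType) (V : finType) (S P : V -> {set V}).
Hypothesis P_neq0 : forall x, P x != set0.

Lemma qword_ge0 x : 0 <= qword F S P x.
Proof. by apply: le_bigmin => // x' _; rewrite divr_ge0 ?ler0n. Qed.

Lemma qword_le1 x : qword F S P x <= 1.
Proof. exact: bigmin_le_id. Qed.

Lemma qword_le_overlap_ratio x x' :
  x' \in S x -> qword F S P x <= overlap_ratio F P x x'.
Proof. exact: bigmin_le_cond. Qed.

Lemma overlap_defect_le_qsent (L R : nat) (X X' : sentence V L) :
  X' \in adv_set R S X ->
  1 - \prod_i overlap_ratio F P (X i) (X' i) <= qsent F R S P X.
Proof.
rewrite inE => /andP[card_D /forallP X'_syn]; rewrite lerB //.
set D := [set i | X' i != X i] in card_D.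
have -> : \prod_i overlap_ratio F P (X i) (X' i)
          = \prod_(i in D) overlap_ratio F P (X i) (X' i).
  rewrite [LHS](bigID (mem D)) /= [X in _ * X]big1 ?mulr1 // => i.
  by rewrite inE negbK => /eqP->; apply: overlap_ratio_id.
apply: le_trans (_ : \prod_(i in D) qword F S P (X i) <= _).
  by apply: prod_take_sort_le => // i; rewrite qword_ge0 qword_le1.
apply: ler_prod => i _; rewrite qword_ge0.
exact/qword_le_overlap_ratio/X'_syn.
Qed.

End WordBounds.

Theorem theorem1 (F : realFieldType) (V Y : finType) (L R : nat)
  (S P : V -> {set V}) (f : sentence V L -> Y)
  (HS_refl : forall x : V, x \in S x)
  (HS_sym : forall x x' : V, (x' \in S x) = (x \in S x'))
  (HP_ne : forall x : V, P x != set0)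
  (HL : (1 <= L)%N) (HR : (R <= L)%N)
  (HPcard : forall x x' : V, x' \in S x -> #|P x| = #|P x'|)
  (X : sentence V L) (c : Y) :
  (forall X' : sentence V L, X' \in adv_set R S X ->
     Num.max (gRS F P f X c - qsent F R S P X) 0 <= gRS F P f X' c /\
     gRS F P f X' c <= Num.min (gRS F P f X c + qsent F R S P X) 1) /\
  (forall X' : sentence V L, X' \in adv_set R S X ->
     `|gRS F P f X' c - gRS F P f X c| <= qsent F R S P X).
Proof.
have dist_le X' : X' \in adv_set R S X ->
    `|gRS F P f X' c - gRS F P f X c| <= qsent F R S P X.
  move=> X'_adv; have card_X' i : #|P (X' i)| = #|P (X i)|.
    by move: X'_adv; rewrite inE => /andP[_ /forallP/(_ i)/HPcard ->].
  apply: le_trans (dist_gRS_le F HP_ne f c card_X') _.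
  exact: (overlap_defect_le_qsent F HP_ne X'_adv).
split=> // X' /dist_le; rewrite ler_norml => /andP[lo hi].
have := gRS_ge0 F P f X' c; have := gRS_le1 F HP_ne f X' c.
by rewrite ge_max le_min; lra.
Qed.
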